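(* Let $k$ and $d$ be positive integers with $k\geq 2d$, and let $G^d_k$ be the circular clique graph. Then $\chi(G^d_k)\geq box(G^d_k)$.
   Context: The circular clique $G^d_k$ (for positive integers $k\ge 2d$) is the simple graph with vertex set $\{a_j : 0\leq j\leq k-1\}$ in which $a_ia_j$ is an edge if and only if $d\leq |i-j|\leq k-d$. $\chi(G)$ denotes the chromatic number. An $\ell$-box is a Cartesian product $[x_1,y_1]\times\cdots\times[x_\ell,y_\ell]$ of $\ell$ closed bounded real intervals; the boxicity $box(G)$ of a graph $G$ is the least positive integer $\ell$ such that $G$ is isomorphic to the intersection graph of a family of $\ell$-boxes (vertices are boxes, adjacent iff the boxes intersect). *)

From Stdlib Require Import Reals.
From mathcomp Require Import all_boot.
Set Implicit Arguments. Unset Strict Implicit. Unset Printing Implicit Defensive.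

Definition distn (i j : nat) : nat := if i <= j then j - i else i - j.

Definition circ_adj (k d : nat) : rel 'I_k :=
  fun i j => (d <= distn i j) && (distn i j <= k - d).
Arguments circ_adj : clear implicits.

Definition colorable (T : finType) (e : rel T) (c : nat) : Prop :=
  exists f : T -> 'I_c, forall u v, e u v -> f u <> f v.

Definition is_chromatic_number (T : finType) (e : rel T) (c : nat) : Prop :=
  colorable e c /\ forall m, m < c -> ~ colorable e m.

Definition in_box (l : nat) (lo hi : 'I_l -> R) (x : 'I_l -> R) : Prop :=
  forall i, Rle (lo i) (x i) /\ Rle (x i) (hi i).

Definition box_representable (T : finType) (e : rel T) (l : nat) : Prop :=
  exists lo hi : T -> 'I_l -> R,
    (forall v i, Rle (lo v i) (hi v i)) /\
    forall u v, u <> v ->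
      (e u v <-> exists x : 'I_l -> R, in_box (lo u) (hi u) x /\ in_box (lo v) (hi v) x).

Definition is_boxicity (T : finType) (e : rel T) (b : nat) : Prop :=
  0 < b /\ box_representable e b /\
  forall l, 0 < l -> l < b -> ~ box_representable e l.

(* A colouring of G^d_k with c colours has colour classes of size at most d,
   since an independent set lies in an arc of d consecutive vertices; hence
   k <= c d and the vertex set splits into c blocks of d consecutive vertices.
   Block j yields an interval supergraph of G^d_k: vertices of the block become
   points, and every other vertex an interval starting at 0 that reaches exactly
   the block vertices it is adjacent to.  Every non-edge is lost in the block of
   one of its endpoints, so the c interval graphs intersect to G^d_k, which
   gives a representation by c-boxes. *)
From mathcomp Require Import all_boot zify.
From Stdlib Require Import Lia Lra Reals Wf_nat Classical.

Set Implicit Arguments.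
Unset Strict Implicit.
Unset Printing Implicit Defensive.

Lemma card_le_of_colorable (T : finType) (e : rel T) (c m : nat) :
  (forall A : {pred T}, {in A &, forall u v, ~~ e u v} -> #|A| <= m) ->
  colorable e c -> #|T| <= c * m.
Proof.
move=> indep_le [f f_proper].
have -> : c * m = \sum_(col < c) m by rewrite sum_nat_const card_ord.
rewrite -sum1_card (partition_big f predT) //=.
apply: leq_sum => col _; rewrite sum1_card.
apply: indep_le => u v /eqP/val_inj fu /eqP/val_inj fv.
by apply/negP => /f_proper; rewrite fu fv.
Qed.

Lemma boxes_meetP (l : nat) (lo1 hi1 lo2 hi2 : 'I_l -> R) :
  (forall i, Rle (lo1 i) (hi1 i)) -> (forall i, Rle (lo2 i) (hi2 i)) ->
  (exists x, in_box lo1 hi1 x /\ in_box lo2 hi2 x) <->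
  (forall i, Rle (lo1 i) (hi2 i) /\ Rle (lo2 i) (hi1 i)).
Proof.
move=> le1 le2; split=> [[x [in1 in2]] i | meet].
  by have [] := in1 i; have [] := in2 i; split; lra.
exists (fun i => Rmax (lo1 i) (lo2 i)).
split=> i; have [] := meet i; have := le1 i; have := le2 i;
  split; by [apply: Rmax_l | apply: Rmax_r | apply: Rmax_lub].
Qed.

Lemma box_representable_of_intervals (T : finType) (e : rel T) (l : nat)
    (lo hi : T -> 'I_l -> nat) :
  (forall v i, lo v i <= hi v i) ->
  (forall u v, u <> v ->
     e u v <-> forall i, (lo u i <= hi v i) && (lo v i <= hi u i)) ->
  box_representable e l.
Proof.
have INR_leq (a b : nat) : Rle (INR a) (INR b) <-> a <= b.
  by split=> [/INR_le/leP | /leP/le_INR].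
move=> lo_le_hi e_meet.
exists (fun v i => INR (lo v i)), (fun v i => INR (hi v i)).
split=> [v i | u v neq_uv]; first exact/INR_leq.
rewrite boxes_meetP => [|i|i]; try exact/INR_leq.
rewrite e_meet //; split=> meet i; have := meet i.
  by case/andP; split; apply/INR_leq.
by rewrite !INR_leq => -[-> ->].
Qed.

Lemma exists_boxicity_le (T : finType) (e : rel T) (l : nat) :
  0 < l -> box_representable e l ->
  exists b, is_boxicity e b /\ b <= l.
Proof.
move=> l_gt0 rep_l.
pose P b := 0 < b /\ box_representable e b.
have [b [[[b_gt0 rep_b] b_least] _]] : has_unique_least_element le P.
  apply: dec_inh_nat_subset_has_unique_least_element => [n|]; first exact: classic.
  by exists l.
exists b; split; last exact/leP/b_least.
split=> //; split=> // n n_gt0 n_lt_b rep_n.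
by have /leP := b_least n (conj n_gt0 rep_n); lia.
Qed.

Lemma distnC (u v : nat) : distn u v = distn v u.
Proof. by rewrite /distn; case: (leqP u v); case: (leqP v u); lia. Qed.

Section CircularCliqueBoxes.

Variables k d : nat.
Hypotheses (d_gt0 : 0 < d) (two_d_le_k : 2 * d <= k).

Lemma circ_adjC (u v : 'I_k) : circ_adj k d u v = circ_adj k d v u.
Proof. by rewrite /circ_adj distnC. Qed.

Lemma circ_indep_card_le (A : {pred 'I_k}) :
  {in A &, forall u v, ~~ circ_adj k d u v} -> #|A| <= d.
Proof.
move=> indepA; case: (pickP A) => [v0 Av0 | A0]; last by rewrite eq_card0.
have [s As s_min] := arg_minnP (fun v : 'I_k => val v) Av0.
have [d' d_eq] : exists d', d = d'.+1 by exists d.-1; lia.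
(* A lies on the arc of d vertices starting at its least element s, and
   offset v is the position of v on that arc. *)
pose offset (v : 'I_k) : 'I_d'.+1 :=
  inord (if v - s < d then v - s else v - s - (k - d)).
rewrite [X in _ <= X]d_eq -[X in _ <= X]card_ord.
apply: (@leq_card_in _ _ offset) => u v Au Av offset_uv.
have u_lt := ltn_ord u; have v_lt := ltn_ord v.
have s_le_u : s <= u := s_min _ Au; have s_le_v : s <= v := s_min _ Av.
apply: val_inj; move/(congr1 val): offset_uv.
have := indepA _ _ Au Av; have := indepA _ _ Au As; have := indepA _ _ Av As.
rewrite /circ_adj /distn /= !inordK; repeat case: ifP; lia.
Qed.

Definition in_block (j v : nat) := j * d <= v < j * d + d.

(* Coordinate j of the box of vertex v is [block_lo j v, block_hi j v]. *)
Definition block_lo (j v : nat) : nat := if in_block j v then v else 0.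

Definition block_hi (j v : nat) : nat :=
  if in_block j v then v else if v < j * d then v + k - d else v - d.

Definition block_meet (j u v : nat) : bool :=
  (block_lo j u <= block_hi j v) && (block_lo j v <= block_hi j u).

Lemma block_lo_le_hi (j v : nat) : block_lo j v <= block_hi j v.
Proof. by rewrite /block_lo /block_hi; case: ifP. Qed.

Lemma block_meetC (j u v : nat) : block_meet j u v = block_meet j v u.
Proof. exact: andbC. Qed.

Lemma in_block_divn (v : nat) : in_block (v %/ d) v.
Proof. by rewrite /in_block leq_divM /= -mulSnr -ltn_divLR. Qed.

Lemma block_meet_adj (j : nat) (u v : 'I_k) :
  circ_adj k d u v -> block_meet j u v.
Proof.
have := ltn_ord u; have := ltn_ord v.
rewrite /circ_adj /block_meet /block_lo /block_hi /in_block /distn.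
by repeat case: ifP; lia.
Qed.

Lemma block_meet_near (j u v : nat) :
  u < v -> v - u < d -> in_block j u -> ~~ block_meet j u v.
Proof.
rewrite /block_meet /block_lo /block_hi /in_block.
by repeat case: ifP; lia.
Qed.

Lemma block_meet_far (j u v : nat) :
  u < v -> k - d < v - u -> in_block j v -> ~~ block_meet j u v.
Proof.
rewrite /block_meet /block_lo /block_hi /in_block.
by repeat case: ifP; lia.
Qed.

Lemma block_separates_nonadj (c : nat) (u v : 'I_k) :
  k <= c * d -> u != v -> ~~ circ_adj k d u v ->
  exists2 j, j < c & ~~ block_meet j u v.
Proof.
move=> k_le_cd.
wlog u_lt_v : u v / u < v.
  move=> sep; case: (ltngtP u v) => [|v_lt_u|/val_inj->]; [exact: sep| |by rewrite eqxx].
  rewrite eq_sym circ_adjC => neq_vu nadj.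
  by have [j j_lt] := sep v u v_lt_u neq_vu nadj; rewrite block_meetC; exists j.
have block_lt (w : 'I_k) : w %/ d < c by rewrite ltn_divLR //; have := ltn_ord w; lia.
have dist_uv : distn u v = v - u by rewrite /distn ltnW.
rewrite /circ_adj /= dist_uv negb_and -!ltnNge => _ /orP [near | far].
  by exists (u %/ d); rewrite // block_meet_near ?in_block_divn.
by exists (v %/ d); rewrite // block_meet_far ?in_block_divn.
Qed.

Lemma circ_box_representable (c : nat) :
  k <= c * d -> box_representable (circ_adj k d) c.
Proof.
move=> k_le_cd.
apply: (@box_representable_of_intervals _ _ _
  (fun (v : 'I_k) (j : 'I_c) => block_lo j v) (fun v j => block_hi j v))
  => [v j|u v neq_uv].
  exact: block_lo_le_hi.
have {}neq_uv : u != v by apply/eqP.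
split=> [adj j | meet]; first exact: block_meet_adj.
apply: contraT => nadj.
have [j j_lt] := block_separates_nonadj k_le_cd neq_uv nadj.
by case/negP; exact: meet (Ordinal j_lt).
Qed.

End CircularCliqueBoxes.

Theorem theorem2p2 (k d : nat) (hd : 0 < d) (hk : 2 * d <= k) (c : nat) :
  is_chromatic_number (circ_adj k d) c ->
  exists b, is_boxicity (circ_adj k d) b /\ b <= c.
Proof.
move=> [colorable_c _].
have k_le_cd : k <= c * d.
  rewrite -[k]card_ord; apply: card_le_of_colorable colorable_c.
  exact: circ_indep_card_le.
have c_gt0 : 0 < c by case: c k_le_cd {colorable_c} => //; lia.
exact: exists_boxicity_le c_gt0 (circ_box_representable hd hk k_le_cd).
Qed.
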